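(* For a combinatorial auction with $m\ge2$ items and $n\ge2$ bidders with unit-demand valuations, there is no randomized mechanism that is universally obviously strategy-proof, satisfies individual rationality and no negative transfers, and gives an approximation better than $\frac{8}{7}$ to the optimal social welfare; i.e., every such mechanism has $\sup_v\mathrm{OPT}(v)/\mathbb{E}[W(v)]\ge 8/7$.
   Context: A valuation is unit-demand if there are $v_{ij}\ge0$ with $v_i(A)=\max_{j\in A}v_{ij}$. Each bidder's domain $V_i$ is the set of unit-demand valuations (publicly known), valuations private, utilities quasi-linear. A deterministic mechanism is a rooted tree: each internal node is assigned to one bidder, who sends one of the messages labeling the outgoing edges; each leaf is labeled with a feasible allocation (disjoint bundles) and a payment for each bidder. A behavior $B_i$ specifies a message at every node of bidder $i$; a profile $B$ determines a root-to-leaf path $\mathrm{Path}(B)$ with bundle $f_i(B)$ and payment $p_i(B)$ for $i$. A strategy $\mathcal S_i$ maps each $v_i\in V_i$ to a behavior; it is obviously dominant if for every $v_i\in V_i$, every node $u$ of $i$, every $B_{-i}$ and every profile $B'$ with $u\in\mathrm{Path}(\mathcal S_i(v_i),B_{-i})\cap\mathrm{Path}(B')$ and $B'_i$ sending at $u$ a message different from $\mathcal S_i(v_i)$'s, $v_i(f_i(\mathcal S_i(v_i),B_{-i}))-p_i(\mathcal S_i(v_i),B_{-i})\ge v_i(f_i(B'))-p_i(B')$. A randomized mechanism is a probability distribution over deterministic mechanisms each with strategies; it is universally OSP if every mechanism in its support is OSP. Individual rationality: in every mechanism of the support, for every profile in $\prod_iV_i$, following the strategies gives each bidder utility $\ge0$.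 No negative transfers: every payment at every leaf of every mechanism in the support is $\ge0$. $\mathbb{E}[W(v)]$ is the expected welfare when bidders follow their strategies on profile $v$; $\mathrm{OPT}(v)$ is the optimal welfare. *)

From HB Require Import structures.
From mathcomp Require Import all_boot all_order all_algebra.
From mathcomp Require Import all_classical all_reals all_analysis.

Set Implicit Arguments.
Unset Strict Implicit.
Unset Printing Implicit Defensive.

Import Order.TTheory GRing.Theory Num.Theory.
Local Open Scope ring_scope.

Section Auction.
Variables (R : realType) (n m : nat).

Definition valuation := 'I_m -> R.

(* unit-demand: nonnegative item values; the bundle value is the max. *)
Definition unit_demand (v : valuation) : Prop := forall j, 0 <= v j.

Definition vbundle (v : valuation) (A : {set 'I_m}) : R :=
  \big[Num.max/0]_(j in A) v j.

Definition allocation := 'I_n -> {set 'I_m}.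

Definition feasible (a : allocation) : bool :=
  [forall i : 'I_n, [forall i' : 'I_n, (i != i') ==> [disjoint a i & a i']]].

Inductive mech : Type :=
  | Leaf (a : allocation) (p : 'I_n -> R)
  | Node (owner : 'I_n) (M : Type) (next : M -> mech).

(* A behavior: a message at every internal node of the tree (the messages
   at nodes not owned by the bidder are never used). *)
Fixpoint beh (t : mech) : Type :=
  match t with
  | Leaf _ _ => unit
  | Node _ M k => (M * (forall x : M, beh (k x)))%type
  end.

Definition profile (t : mech) := 'I_n -> beh t.

Fixpoint outcome (t : mech) : profile t -> allocation * ('I_n -> R) :=
  match t return profile t -> allocation * ('I_n -> R) with
  | Leaf a p => fun _ => (a, p)
  | Node j M k => fun B => let x := (B j).1 in
                  @outcome (k x) (fun i => (B i).2 x)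
  end.

(* Positions (nodes) of the tree: None = the root, Some (x, u) = the node u
   of the subtree reached through edge x. *)
Fixpoint pos (t : mech) : Type :=
  match t with
  | Leaf _ _ => unit
  | Node _ M k => option {x : M & pos (k x)}
  end.

Fixpoint owner_at (t : mech) : pos t -> option 'I_n :=
  match t return pos t -> option 'I_n with
  | Leaf _ _ => fun _ => None
  | Node j M k => fun u =>
      match u with
      | None => Some j
      | Some (existT x u') => owner_at u'
      end
  end.

Fixpoint on_path (t : mech) : profile t -> pos t -> Prop :=
  match t return profile t -> pos t -> Prop with
  | Leaf _ _ => fun _ _ => True
  | Node j M k => fun B u =>
      match u with
      | None => True
      | Some (existT x u') =>
          (B j).1 = x /\ on_path (fun i => (B i).2 x) u'
      end
  end.

Fixpoint differ_at (t : mech) : beh t -> beh t -> pos t -> Prop :=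
  match t return beh t -> beh t -> pos t -> Prop with
  | Leaf _ _ => fun _ _ _ => False
  | Node j M k => fun b b' u =>
      match u with
      | None => b.1 <> b'.1
      | Some (existT x u') => differ_at (b.2 x) (b'.2 x) u'
      end
  end.

Fixpoint all_leaves (P : allocation -> ('I_n -> R) -> Prop) (t : mech) : Prop :=
  match t with
  | Leaf a p => P a p
  | Node _ M k => forall x : M, all_leaves P (k x)
  end.

Record dmech := DMech {
  tree : mech;
  strat : 'I_n -> valuation -> beh tree }.

Definition upd (t : mech) (B : profile t) (i : 'I_n) (b : beh t) : profile t :=
  fun j => if j == i then b else B j.

Definition utility (v : valuation) (o : allocation * ('I_n -> R)) (i : 'I_n) : R :=
  vbundle v (o.1 i) - o.2 i.

Definition play (D : dmech) (v : 'I_n -> valuation) :=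
  outcome (fun i => strat D i (v i)).

Definition feasible_leaves (D : dmech) : Prop :=
  all_leaves (fun a _ => feasible a) (tree D).

Definition OSP (D : dmech) : Prop :=
  forall (i : 'I_n) (vi : valuation), unit_demand vi ->
  forall (u : pos (tree D)), owner_at u = Some i ->
  forall (B B' : profile (tree D)),
    on_path (upd B i (strat D i vi)) u ->
    on_path B' u ->
    differ_at (strat D i vi) (B' i) u ->
    utility vi (outcome B') i <= utility vi (outcome (upd B i (strat D i vi))) i.

Definition indiv_rational (D : dmech) : Prop :=
  forall v : 'I_n -> valuation, (forall i, unit_demand (v i)) ->
  forall i, 0 <= utility (v i) (play D v) i.

Definition no_negative_transfers (D : dmech) : Prop :=
  all_leaves (fun _ p => forall i, 0 <= p i) (tree D).

Definition welfare (D : dmech) (v : 'I_n -> valuation) : R :=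
  \sum_i vbundle (v i) ((play D v).1 i).

Definition OPT (v : 'I_n -> valuation) : R :=
  \big[Num.max/0]_(a : {ffun 'I_n -> {set 'I_m}} | feasible a)
     \sum_i vbundle (v i) (a i).

End Auction.

(* A randomized mechanism: a random variable D : Omega -> dmech on a
   probability space; universally OSP / IR / NNT = every realization is. *)
Definition rand_mech_ok (R : realType) (n m : nat) (d : measure_display)
  (Omega : measurableType d) (D : Omega -> dmech R n m) : Prop :=
  (forall w, feasible_leaves (D w)) /\
  (forall w, OSP (D w)) /\
  (forall w, indiv_rational (D w)) /\
  (forall w, no_negative_transfers (D w)) /\
  (forall v, measurable_fun [set: Omega] (fun w => welfare (D w) v)).

Definition expected_welfare (R : realType) (n m : nat) (d : measure_display)
  (Omega : measurableType d) (P : probability Omega R)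
  (D : Omega -> dmech R n m) (v : 'I_n -> valuation R m) : \bar R :=
  (\int[P]_w (welfare (D w) v)%:E)%E.

(* Fix two items A, B, two bidders and a scale s > 0.  In the instance
   hard i i' s, bidder i values only B (at 3 s) and bidder i' values A at s
   and B at 3 s; both hard i1 i2 s and hard i2 i1 s have optimal welfare 4 s,
   and any welfare above 3 s requires B to go to the first-named bidder.

   Let a deterministic OSP, IR, NNT mechanism have welfare above 7 s on both
   instances for infinitely many scales s = 2^M.  For M < M', the
   val_AB-bidder at scale 2^M' gets at most 2^M' truthfully, while mimicking
   the val_B-bidder at scale 2^M would win B at a price of at most 3 2^M;
   obvious dominance therefore forbids it from being the first to split the
   two paths at one of its nodes.  Descending the tree while keeping
   infinitely many such scales, some scale sends both instances to the same
   leaf, which is impossible since B goes to different bidders.  So every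
   deterministic mechanism eventually has total welfare at most 7 s on the
   pair; by continuity of the probability this holds with probability close
   to 1 for a randomized one, so for some scale one of the two instances has
   expected welfare close to 7 s / 2, i.e. a ratio close to 8/7. *)

From HB Require Import structures.
From mathcomp Require Import all_boot all_order all_algebra.
From mathcomp Require Import all_classical all_reals all_analysis.
From mathcomp Require Import measurable_realfun lra.
Import Order.TTheory GRing.Theory Num.Theory.
Local Open Scope ring_scope.
Set Implicit Arguments.
Unset Strict Implicit.
Unset Printing Implicit Defensive.

Section Bundles.
Variables (R : realType) (m : nat).
Implicit Types (v : valuation R m) (A : {set 'I_m}).

Lemma vbundle_ge v A j : j \in A -> v j <= vbundle v A.
Proof. by move=> jA; rewrite /vbundle (bigD1 j) //= le_max lexx. Qed.

Lemma vbundle_le v A c : 0 <= c -> (forall j, j \in A -> v j <= c) ->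
  vbundle v A <= c.
Proof.
move=> c0 vc; rewrite /vbundle; elim/big_ind: _ => // x y xc yc.
by rewrite ge_max xc yc.
Qed.

Lemma vbundle_ge0 v A : unit_demand v -> 0 <= vbundle v A.
Proof.
by move=> ud; rewrite /vbundle; elim/big_ind: _ => // x y x0 _; rewrite le_max x0.
Qed.

Lemma vbundle0 A : vbundle (fun _ => 0 : R) A = 0.
Proof. by rewrite /vbundle; elim/big_ind: _ => // x y -> ->; rewrite maxxx. Qed.

End Bundles.

Section Allocations.
Variables (R : realType) (n m : nat).

Lemma feasible_disjoint (a : allocation n m) i i' j :
  feasible a -> i != i' -> j \in a i -> j \notin a i'.
Proof.
move=> /forallP/(_ i)/forallP/(_ i') /implyP dis ii' ji.
by rewrite (disjointFr (dis ii') ji).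
Qed.

Definition assignment_alloc (g : 'I_m -> option 'I_n) : {ffun 'I_n -> {set 'I_m}} :=
  [ffun i => [set j | g j == Some i]].

Lemma feasible_assignment g : feasible (assignment_alloc g).
Proof.
apply/forallP => i; apply/forallP => i'; apply/implyP => ii'.
rewrite !ffunE; apply/pred0P => j /=; rewrite !inE.
by case: eqP => //= ->; apply/eqP => -[ei]; rewrite ei eqxx in ii'.
Qed.

Lemma OPT_ge (v : 'I_n -> valuation R m) (a : {ffun 'I_n -> {set 'I_m}}) :
  feasible a -> \sum_i vbundle (v i) (a i) <= OPT v.
Proof. by move=> fa; rewrite /OPT (bigD1 a) //= le_max lexx. Qed.

End Allocations.

Section TwoBidderProfiles.
Variables (R : realType) (n m : nat).

Definition vpair (i i' : 'I_n) (x y : valuation R m) : 'I_n -> valuation R m :=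
  fun k => if k == i then x else if k == i' then y else fun _ => 0.

Lemma vpair_l i i' x y : vpair i i' x y i = x.
Proof. by rewrite /vpair eqxx. Qed.

Lemma vpair_r i i' x y : i != i' -> vpair i i' x y i' = y.
Proof. by move=> ii'; rewrite /vpair eq_sym (negbTE ii') eqxx. Qed.

Lemma vpair_other i i' x y k : k != i -> k != i' -> vpair i i' x y k = fun _ => 0.
Proof. by move=> ki ki'; rewrite /vpair (negbTE ki) (negbTE ki'). Qed.

Lemma vpair_unit_demand i i' x y k :
  unit_demand x -> unit_demand y -> unit_demand (vpair i i' x y k).
Proof. by move=> ux uy; rewrite /vpair; case: ifP => // _; case: ifP => // _ j. Qed.

Lemma sum_vpair i i' x y (a : allocation n m) : i != i' ->
  \sum_k vbundle (vpair i i' x y k) (a k) = vbundle x (a i) + vbundle y (a i').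
Proof.
move=> ii'; rewrite (bigD1 i) //= (bigD1 i') /=; last by rewrite eq_sym.
rewrite big1 => [|k /andP[ki' ki]]; last by rewrite vpair_other // vbundle0.
by rewrite vpair_l vpair_r // addr0.
Qed.

End TwoBidderProfiles.

Definition unbounded (S : nat -> Prop) := forall N, exists2 M, S M & (N < M)%N.

Lemma not_unbounded S : ~ unbounded S -> exists N, forall M, (N <= M)%N -> ~ S M.
Proof.
move=> nS; apply: contrapT => noN; apply: nS => N; apply: contrapT => noM.
by apply: noN; exists N.+1 => M NM SM; apply: noM; exists M.
Qed.

Lemma unbounded_common_value (X : Type) S (a b : nat -> X) : unbounded S ->
  (forall M M', S M -> S M' -> (M < M')%N -> b M' = a M) ->
  exists x, unbounded (fun M => [/\ S M, a M = x & b M = x]).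
Proof.
move=> uS ab; have [M0 SM0 _] := uS 0%N.
exists (a M0) => N; have [M SM] := uS (maxn N M0); rewrite gtn_max => /andP[NM M0M].
have [M2 SM2 MM2] := uS M.
exists M => //; split => //; last exact: ab.
by rewrite -(ab _ _ SM SM2 MM2) (ab _ _ SM0 SM2 (ltn_trans M0M MM2)).
Qed.

Section Trees.
Variables (R : realType) (n m : nat).
Implicit Types (t : mech R n m) (D : dmech R n m).

Lemma all_leaves_outcome (Q : allocation n m -> ('I_n -> R) -> Prop) t :
  all_leaves Q t -> forall B : profile t, Q (outcome B).1 (outcome B).2.
Proof. by elim: t => [a p|j M k IH] //= Qt B; apply: IH. Qed.

Definition truthful D (v : 'I_n -> valuation R m) : profile (tree D) :=
  fun i => strat D i (v i).

Lemma play_feasible D v : feasible_leaves D -> feasible (play D v).1.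
Proof. by move=> fD; apply: (all_leaves_outcome fD). Qed.

Lemma play_payment_ge0 D v i : no_negative_transfers D -> 0 <= (play D v).2 i.
Proof. by move=> nD; apply: (all_leaves_outcome nD). Qed.

Lemma welfare_ge0 D v : (forall i, unit_demand (v i)) -> 0 <= welfare D v.
Proof. by move=> ud; apply: sumr_ge0 => i _; apply: vbundle_ge0. Qed.

Lemma OSP_play D i (v : 'I_n -> valuation R m) (B' : profile (tree D)) u :
  OSP D -> unit_demand (v i) -> owner_at u = Some i ->
  on_path (truthful D v) u -> on_path B' u -> differ_at (strat D i (v i)) (B' i) u ->
  utility (v i) (outcome B') i <= utility (v i) (play D v) i.
Proof.
move=> osp ud ou onv onB' dif.
have upd_id : upd (truthful D v) i (strat D i (v i)) = truthful D v.
  by apply: funext => k; rewrite /upd; case: eqP => // ->.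
by have := osp i (v i) ud u ou (truthful D v) B'; rewrite upd_id; apply.
Qed.

Definition subprofile j (X : Type) (k : X -> mech R n m) (B : profile (Node j k))
  (x : X) : profile (k x) := fun i => (B i).2 x.

Lemma outcome_Node j (X : Type) (k : X -> mech R n m) (B : profile (Node j k)) x :
  (B j).1 = x -> outcome B = outcome (subprofile B x).
Proof. by move=> /= <-. Qed.

Definition defers t (S : nat -> Prop) (i : 'I_n) (PP QQ : nat -> profile t) :=
  forall M M', S M -> S M' -> (M < M')%N ->
  forall u : pos t, owner_at u = Some i -> on_path (PP M) u -> on_path (QQ M') u ->
  ~ differ_at (QQ M' i) (PP M i) u.

Lemma defers_root j (X : Type) (k : X -> mech R n m) S (PP QQ : nat -> profile (Node j k)) :
  defers S j PP QQ ->
  forall M M', S M -> S M' -> (M < M')%N -> (QQ M' j).1 = (PP M j).1.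
Proof. by move=> dPQ M M' SM SM' MM'; apply: contrapT; apply: (dPQ M M' SM SM' MM' None). Qed.

Lemma defers_subprofile j (X : Type) (k : X -> mech R n m) x S S' i
    (PP QQ : nat -> profile (Node j k)) :
  (forall M, S' M -> [/\ S M, (PP M j).1 = x & (QQ M j).1 = x]) ->
  defers S i PP QQ ->
  defers S' i (fun M => subprofile (PP M) x) (fun M => subprofile (QQ M) x).
Proof.
move=> S'S dPQ M M' /S'S[SM ePM _] /S'S[SM' _ eQM'] MM' u ou onP onQ.
exact: (dPQ M M' SM SM' MM' (Some (existT _ x u)) ou (conj ePM onP) (conj eQM' onQ)).
Qed.

Lemma defers_same_outcome t S i1 i2 (PP QQ : nat -> profile t) :
  i1 != i2 -> unbounded S ->
  (forall i, i != i1 -> i != i2 -> forall M M', PP M i = PP M' i /\ QQ M i = PP M' i) ->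
  defers S i1 PP QQ -> defers S i2 QQ PP ->
  exists2 M, S M & outcome (PP M) = outcome (QQ M).
Proof.
move=> i12; elim: t S PP QQ => [a p|j X k IH] S PP QQ uS others d1 d2.
  by have [M SM _] := uS 0%N; exists M.
have [x ux] : exists x, unbounded (fun M => [/\ S M, (PP M j).1 = x & (QQ M j).1 = x]).
  have [ej1|j1] := eqVneq j i1.
    by subst j; apply: unbounded_common_value (defers_root d1).
  have [ej2|j2] := eqVneq j i2.
    subst j; have [x ux] := unbounded_common_value uS (defers_root d2).
    by exists x => N; have [M [SM eQ eP] NM] := ux N; exists M.
  exists (PP 0%N j).1 => N; have [M SM NM] := uS N; exists M => //.
  by have [-> ->] := others j j1 j2 M 0%N.
have [|||M [SM ePM eQM] same] := IH x _ (fun M => subprofile (PP M) x)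
    (fun M => subprofile (QQ M) x) ux _ (defers_subprofile _ d1) (defers_subprofile _ d2).
- by move=> i i1' i2' M M'; rewrite /subprofile; have [-> ->] := others i i1' i2' M M'.
- by [].
- by move=> M [].
by exists M => //; rewrite (outcome_Node ePM) (outcome_Node eQM).
Qed.

End Trees.

Lemma scale_gap (R : realType) M M' : (M < M')%N -> 3 * 2 ^+ M < 2 * 2 ^+ M' :> R.
Proof.
move=> MM'; have : 2 ^+ M.+1 <= 2 ^+ M' :> R by rewrite ler_eXn2l // ltr1n.
have : 0 < 2 ^+ M :> R by rewrite exprn_gt0.
by rewrite exprS; lra.
Qed.

Section HardInstances.
Variables (R : realType) (n m : nat) (jA jB : 'I_m).
Hypothesis jAB : jA != jB.
Implicit Types (s : R) (A : {set 'I_m}) (D : dmech R n m).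

Definition val_B s : valuation R m := fun j => if j == jB then 3 * s else 0.

Definition val_AB s : valuation R m := fun j => if j == jA then s else val_B s j.

Definition hard (i i' : 'I_n) s := vpair i i' (val_B s) (val_AB s).

Lemma val_B_unit_demand s : 0 <= s -> unit_demand (val_B s).
Proof. by move=> s0 j; rewrite /val_B; case: ifP => _ //; lra. Qed.

Lemma val_AB_unit_demand s : 0 <= s -> unit_demand (val_AB s).
Proof. by move=> s0 j; rewrite /val_AB; case: ifP => _ //; apply: val_B_unit_demand. Qed.

Lemma hard_unit_demand i i' s k : 0 <= s -> unit_demand (hard i i' s k).
Proof.
by move=> s0; apply: vpair_unit_demand; [apply: val_B_unit_demand|apply: val_AB_unit_demand].
Qed.

Lemma vbundle_val_B s A : 0 <= s -> vbundle (val_B s) A = if jB \in A then 3 * s else 0.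
Proof.
move=> s0; apply/le_anti/andP; split.
  case: ifP => BA; apply: vbundle_le => [|j jA']; rewrite /val_B; try lra.
    by case: ifP => _; lra.
  by case: eqP => [ej|_ //]; rewrite ej BA in jA'.
case: ifP => [BA|_]; last exact/vbundle_ge0/val_B_unit_demand.
by have := vbundle_ge (val_B s) BA; rewrite /val_B eqxx.
Qed.

Lemma vbundle_val_AB s A : 0 <= s ->
  vbundle (val_AB s) A = if jB \in A then 3 * s else if jA \in A then s else 0.
Proof.
move=> s0; apply/le_anti/andP; split.
  apply: vbundle_le => [|j jA']; first by repeat case: ifP => _; lra.
  rewrite /val_AB /val_B; case: eqP => [ej|_]; first by subst j; rewrite jA'; case: ifP => _; lra.
  case: eqP => [ej|_]; first by subst j; rewrite jA'; lra.
  by repeat case: ifP => _; lra.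
case: ifP => [BA|_].
  by have := vbundle_ge (val_AB s) BA; rewrite /val_AB /val_B eq_sym (negbTE jAB) eqxx.
case: ifP => [AA|_]; last exact/vbundle_ge0/val_AB_unit_demand.
by have := vbundle_ge (val_AB s) AA; rewrite /val_AB eqxx.
Qed.

Lemma welfare_hard D i i' s : i != i' ->
  welfare D (hard i i' s) = vbundle (val_B s) ((play D (hard i i' s)).1 i)
                            + vbundle (val_AB s) ((play D (hard i i' s)).1 i').
Proof. exact: sum_vpair. Qed.

Lemma welfare_hard_le D i i' s : feasible_leaves D -> i != i' -> 0 <= s ->
  welfare D (hard i i' s) <= 4 * s.
Proof.
move=> fD ii' s0; rewrite welfare_hard // vbundle_val_B // vbundle_val_AB //.
case: ifPn => [Bi|_]; last by repeat case: ifP => _; lra.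
rewrite (negbTE (feasible_disjoint (play_feasible _ fD) ii' Bi)).
by case: ifP => _; lra.
Qed.

Lemma hard_winner D i i' s : i != i' -> 0 <= s ->
  3 * s < welfare D (hard i i' s) -> jB \in (play D (hard i i' s)).1 i.
Proof.
move=> ii' s0; rewrite welfare_hard // vbundle_val_B // vbundle_val_AB //.
by case: ifP => // _; repeat case: ifP => _; lra.
Qed.

Lemma OPT_hard_ge i i' s : i != i' -> 0 <= s -> 4 * s <= OPT (hard i i' s).
Proof.
move=> ii' s0.
pose g j := if j == jB then Some i else if j == jA then Some i' else None.
apply: le_trans (OPT_ge _ (feasible_assignment g)).
rewrite sum_vpair // !ffunE vbundle_val_B // vbundle_val_AB // !inE /g.
by rewrite !eqxx (negbTE jAB) (inj_eq (@Some_inj _)) (negbTE ii') /= eqxx; lra.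
Qed.

(* Mimicking the [val_B s]-bidder, who wins [B] at a price of at most [3 s]
   by individual rationality, is worth [3 s' - 3 s > s'] to the
   [val_AB s']-bidder, more than it gets when [B] goes elsewhere. *)
Lemma osp_no_split D i (v v' : 'I_n -> valuation R m) s s' u :
  OSP D -> indiv_rational D -> no_negative_transfers D ->
  (forall k, unit_demand (v k)) -> 0 <= s -> 3 * s < 2 * s' ->
  v i = val_B s -> v' i = val_AB s' ->
  jB \in (play D v).1 i -> jB \notin (play D v').1 i ->
  owner_at u = Some i -> on_path (truthful D v') u -> on_path (truthful D v) u ->
  ~ differ_at (strat D i (val_AB s')) (strat D i (val_B s)) u.
Proof.
move=> osp ir nnt ud s0 ss' vi v'i winB loseB ou onv' onv split.
have s'0 : 0 <= s' by lra.
have ud' : unit_demand (v' i) by rewrite v'i; apply: val_AB_unit_demand.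
rewrite -vi -v'i in split.
have := OSP_play osp ud' ou onv' onv split.
rewrite /utility v'i !vbundle_val_AB // -/(play D v) winB (negbTE loseB).
have := ir v ud i; rewrite /utility vi vbundle_val_B // winB.
have := play_payment_ge0 v' i nnt.
by case: ifP => _; lra.
Qed.

Lemma hard_defers D S i i' :
  OSP D -> indiv_rational D -> no_negative_transfers D -> feasible_leaves D -> i != i' ->
  (forall M, S M -> jB \in (play D (hard i i' (2 ^+ M))).1 i) ->
  (forall M, S M -> jB \in (play D (hard i' i (2 ^+ M))).1 i') ->
  defers S i (fun M => truthful D (hard i i' (2 ^+ M)))
             (fun M => truthful D (hard i' i (2 ^+ M))).
Proof.
move=> osp ir nnt fD ii' winsP winsQ M M' SM SM' MM' u ou onP onQ.
rewrite /truthful {1}/hard vpair_r 1?eq_sym // /hard vpair_l.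
apply: osp_no_split (winsP M SM) _ _ onQ onP => //.
- by move=> k; apply: hard_unit_demand; rewrite exprn_ge0.
- exact: scale_gap.
- exact: vpair_l.
- by apply: vpair_r; rewrite eq_sym.
- by apply: feasible_disjoint (play_feasible _ fD) _ (winsQ M' SM'); rewrite eq_sym.
Qed.

Lemma osp_welfare_eventually_le D i1 i2 : i1 != i2 ->
  feasible_leaves D -> OSP D -> indiv_rational D -> no_negative_transfers D ->
  exists N, forall M, (N <= M)%N ->
    welfare D (hard i1 i2 (2 ^+ M)) + welfare D (hard i2 i1 (2 ^+ M)) <= 7 * 2 ^+ M.
Proof.
move=> i12 fD osp ir nnt.
pose S M := 7 * 2 ^+ M < welfare D (hard i1 i2 (2 ^+ M)) + welfare D (hard i2 i1 (2 ^+ M)).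
suff /not_unbounded[N HN] : ~ unbounded S.
  by exists N => M /HN; rewrite /S leNgt => /negP.
move=> uS; have s0 M : 0 <= 2 ^+ M :> R by rewrite exprn_ge0.
have i21 : i2 != i1 by rewrite eq_sym.
have wins M : S M -> jB \in (play D (hard i1 i2 (2 ^+ M))).1 i1 /\
                     jB \in (play D (hard i2 i1 (2 ^+ M))).1 i2.
  move=> SM; have := welfare_hard_le fD i12 (s0 M); have := welfare_hard_le fD i21 (s0 M).
  by rewrite /S in SM; split; apply: hard_winner => //; lra.
have winsP M SM := proj1 (wins M SM); have winsQ M SM := proj2 (wins M SM).
have others i : i != i1 -> i != i2 -> forall M M',
    truthful D (hard i1 i2 (2 ^+ M)) i = truthful D (hard i1 i2 (2 ^+ M')) i /\
    truthful D (hard i2 i1 (2 ^+ M)) i = truthful D (hard i1 i2 (2 ^+ M')) i.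
  by move=> ii1 ii2 M M'; rewrite /truthful /hard !vpair_other.
have [M SM same] := defers_same_outcome i12 uS others
  (hard_defers osp ir nnt fD i12 winsP winsQ) (hard_defers osp ir nnt fD i21 winsQ winsP).
have := feasible_disjoint (play_feasible _ fD) i21 (winsQ M SM).
by move: same; rewrite /play /truthful => <-; rewrite winsP.
Qed.

End HardInstances.

Lemma lteD_split (R : realType) (x y a b : \bar R) :
  (x + y < a + b)%E -> (x < a)%E \/ (y < b)%E.
Proof.
case: (ltP x a) => [|ax]; first by left.
case: (ltP y b) => [|yb]; first by right.
by rewrite ltNge leeD.
Qed.

Lemma muleD_lt_split (R : realType) (r a b c : R) (x y : \bar R) :
  (0 <= x)%E -> (0 <= y)%E -> (x + y <= a%:E)%E -> 0 < b + c -> r * a < b + c ->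
  (r%:E * x < b%:E)%E \/ (r%:E * y < c%:E)%E.
Proof.
move=> x0 y0 xya bc0 rabc; apply: lteD_split; rewrite -ge0_muleDr // -EFinD.
have [r0|r0] := lerP r 0.
  apply: (@le_lt_trans _ _ 0%E); last by rewrite lte_fin.
  by rewrite mule_le0_ge0 ?lee_fin ?adde_ge0.
by apply: le_lt_trans (lee_wpmul2l _ xya) _; rewrite ?lee_fin ?ltW // -EFinM lte_fin.
Qed.

Section Expectation.
Local Open Scope classical_set_scope.
Local Open Scope ereal_scope.
Variables (R : realType) (d : measure_display) (Omega : measurableType d).
Variable P : probability Omega R.

Lemma probability_eventually_gt (F : nat -> set Omega) :
  (forall N, measurable (F N)) ->
  (forall w, exists N, forall M, (N <= M)%N -> F M w) ->
  forall eta : R, (eta < 1)%R -> exists N, eta%:E < P (F N).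
Proof.
move=> mF evF eta eta1.
pose G N := \bigcap_(k in [set k | (N <= k)%N]) F k.
have mG N : measurable (G N) by apply: bigcap_measurableType => k _; apply: mF.
have ndG : nondecreasing_seq G.
  by move=> a b ab; rewrite subsetEset => w Gw k /= bk; apply: Gw; rewrite /= (leq_trans ab).
have UG : \bigcup_N G N = setT.
  by apply/seteqP; split => // w _; have [N HN] := evF w; exists N => // k; apply: HN.
have := @nondecreasing_cvg_mu _ _ _ P _ mG (bigcupT_measurable _ mG) ndG.
have etaP : eta%:E < P setT by rewrite probability_setT lte_fin.
rewrite UG => /(_ _ (open_ereal_gt' etaP)) [N _ HN].
exists N; apply: lt_le_trans (HN N (leqnn N)) _.
by apply: le_measure; rewrite ?inE // => w; apply; rewrite /= leqnn.
Qed.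

(* [c - (c - c') 1_F] dominates [f]. *)
Lemma integral_le_on_event (f : Omega -> R) (F : set Omega) (c c' eta : R) :
  measurable_fun setT f -> measurable F -> (c' <= c)%R ->
  (forall w, 0 <= f w)%R -> (forall w, f w <= c)%R -> (forall w, F w -> f w <= c')%R ->
  eta%:E <= P F -> \int[P]_w (f w)%:E <= (c - (c - c') * eta)%:E.
Proof.
move=> mf mF c'c f0 fc fc' etaF.
have cc'0 : (0 <= c - c')%R by rewrite subr_ge0.
have mf' : measurable_fun [set: Omega] (EFin \o f) by apply/measurable_EFinP.
have mind : measurable_fun [set: Omega] (EFin \o (fun w => (c - c') * \1_F w)%R).
  by apply/measurable_EFinP/measurable_funM => //; apply: measurable_indic.
have sum_le : \int[P]_w ((f w)%:E + ((c - c') * \1_F w)%:E) <= c%:E.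
  rewrite -[leRHS]mule1 -(probability_setT P) -integral_cst //.
  apply: ge0_le_integral => //.
  - by move=> w _; rewrite -EFinD lee_fin addr_ge0 ?mulr_ge0.
  - exact: emeasurable_funD.
  - move=> w _; rewrite -EFinD lee_fin indicE /=; have := fc w.
    by case: (boolP (w \in F)) => [/set_mem /fc'|]; rewrite ?mulr1 ?mulr0; lra.
rewrite ge0_integralD // in sum_le; last 2 first.
- by move=> w _; rewrite lee_fin.
- by move=> w _; rewrite lee_fin mulr_ge0.
rewrite integralZl_indic // in sum_le; last by rewrite ltNge cc'0.
rewrite (integral_indic P measurableT mF) setIT in sum_le.
rewrite EFinB EFinM; apply: le_trans (_ : _ <= c%:E - (c - c')%:E * P F) _.
  by rewrite leeBrDr ?fin_numM ?fin_num_measure.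
by rewrite leeB // lee_wpmul2l.
Qed.

Lemma integralD_le_on_event (f g : Omega -> R) (F : set Omega) (c c' eta : R) :
  measurable_fun setT f -> measurable_fun setT g -> measurable F -> (c' <= c)%R ->
  (forall w, 0 <= f w)%R -> (forall w, 0 <= g w)%R ->
  (forall w, f w + g w <= c)%R -> (forall w, F w -> f w + g w <= c')%R ->
  eta%:E <= P F ->
  \int[P]_w (f w)%:E + \int[P]_w (g w)%:E <= (c - (c - c') * eta)%:E.
Proof.
move=> mf mg mF c'c f0 g0 fgc fgc' etaF.
rewrite -ge0_integralD //; last 4 first.
- by move=> w _; rewrite lee_fin.
- exact/measurable_EFinP.
- by move=> w _; rewrite lee_fin.
- exact/measurable_EFinP.
under eq_integral do rewrite -EFinD.
apply: (integral_le_on_event (measurable_funD mf mg) mF c'c _ fgc fgc' etaF) => w.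
exact: addr_ge0.
Qed.

Lemma expectation_pair_gap (s : nat -> R) (f g : nat -> Omega -> R) (r : R) :
  (forall M, 0 < s M)%R ->
  (forall M, measurable_fun setT (f M)) -> (forall M, measurable_fun setT (g M)) ->
  (forall M w, 0 <= f M w)%R -> (forall M w, 0 <= g M w)%R ->
  (forall M w, f M w + g M w <= 8 * s M)%R ->
  (forall w, exists N, forall M, (N <= M)%N -> f M w + g M w <= 7 * s M)%R ->
  (r < 8 / 7)%R ->
  exists N, r%:E * \int[P]_w (f N w)%:E < (4 * s N)%:E \/
            r%:E * \int[P]_w (g N w)%:E < (4 * s N)%:E.
Proof.
move=> s0 mf mg f0 g0 fg8 fg7 r87.
pose F M := [set w | f M w + g M w <= 7 * s M]%R.
have mF M : measurable (F M).
  rewrite -(setTI (F M)); apply: measurable_fun_ler measurableT _ _ => //.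
  exact: measurable_funD.
(* [r (8 - eta) < 8] rearranges to [(8 - 7 r) (16 - r) > 0]. *)
have [eta [eta1 r_eta]] : exists eta : R, (eta < 1 /\ r * (8 - eta) < 8)%R.
  exists (1 - (8 - 7 * r) / 16)%R; split; first lra.
  have : (0 < (8 - 7 * r) * (16 - r))%R by apply: mulr_gt0; lra.
  nra.
have [N PFN] := probability_eventually_gt mF fg7 eta1.
exists N; apply: muleD_lt_split.
- by apply: integral_ge0 => w _; rewrite lee_fin.
- by apply: integral_ge0 => w _; rewrite lee_fin.
- have le78 : (7 * s N <= 8 * s N)%R by have := s0 N; lra.
  exact: integralD_le_on_event (mF N) le78 _ _ _ (fun w Fw => Fw) (ltW PFN).
- by have := s0 N; lra.
- by have := s0 N; nra.
Qed.

End Expectation.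

Unset Implicit Arguments.

Theorem theorem4p7 (R : realType) (n m : nat) (d : measure_display)
  (Omega : measurableType d) (P : probability Omega R)
  (D : Omega -> dmech R n m) :
  (2 <= m)%N -> (2 <= n)%N ->
  rand_mech_ok D ->
  forall r : R, r < 8 / 7 ->
  exists v : 'I_n -> valuation R m,
    (forall i, unit_demand (v i)) /\
    (r%:E * expected_welfare P D v < (OPT v)%:E)%E.
Proof.
move=> m2 n2 [feasD [ospD [irD [nntD measW]]]] r r87.
pose i1 : 'I_n := Ordinal (ltnW n2); pose i2 : 'I_n := Ordinal n2.
pose jA : 'I_m := Ordinal (ltnW m2); pose jB : 'I_m := Ordinal m2.
have i12 : i1 != i2 by []; have i21 : i2 != i1 by []; have jAB : jA != jB by [].
have s_gt0 M : 0 < 2 ^+ M :> R by rewrite exprn_gt0.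
have ud (i i' : 'I_n) M k : unit_demand (hard jA jB i i' (2 ^+ M : R) k).
  exact/hard_unit_demand/ltW.
have W8 M w : welfare (D w) (hard jA jB i1 i2 (2 ^+ M))
              + welfare (D w) (hard jA jB i2 i1 (2 ^+ M)) <= 8 * 2 ^+ M.
  have := welfare_hard_le jAB (feasD w) i12 (ltW (s_gt0 M)).
  by have := welfare_hard_le jAB (feasD w) i21 (ltW (s_gt0 M)); lra.
have [N [lt|lt]] := expectation_pair_gap P (s := fun M => 2 ^+ M)
  (f := fun M w => welfare (D w) (hard jA jB i1 i2 (2 ^+ M)))
  (g := fun M w => welfare (D w) (hard jA jB i2 i1 (2 ^+ M)))
  s_gt0 (fun M => measW _) (fun M => measW _)
  (fun M w => welfare_ge0 (D w) (ud i1 i2 M)) (fun M w => welfare_ge0 (D w) (ud i2 i1 M)) W8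
  (fun w => osp_welfare_eventually_le jAB i12 (feasD w) (ospD w) (irD w) (nntD w)) r87.
- exists (hard jA jB i1 i2 (2 ^+ N)); split=> [|]; first exact: ud.
  by apply: lt_le_trans lt _; rewrite lee_fin OPT_hard_ge.
- exists (hard jA jB i2 i1 (2 ^+ N)); split=> [|]; first exact: ud.
  by apply: lt_le_trans lt _; rewrite lee_fin OPT_hard_ge.
Qed.
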